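(* Let $E$, $\Lambda_\pm$, $\Lambda_+^*$, $\omega$, $\sigma'$ and $\pi_-\colon Q\to\mathbb P(\Lambda_-)$ be as in the context. Let $v=(\sigma,\tau)\in\Lambda_+\oplus\Lambda_+^*$ be a nonzero isotropic vector and let $\lambda=\tau/(\sigma\lrcorner\omega)\in\mathbb C\cup\{\infty\}$ (i.e. $\tau=\lambda\,\sigma\lrcorner\omega$ if $\sigma\ne0$, and $\lambda=\infty$ if $\sigma=0$). Then $\pi_-([v])$ is the line spanned by $(\sigma',\lambda\,\sigma'\lrcorner\omega)$ (interpreted as $(0,\sigma'\lrcorner\omega)$ if $\lambda=\infty$).
   Context: $E$ is a 4-dimensional complex vector space with nondegenerate symmetric bilinear form $q$; one connected component of the space of 2-dimensional isotropic subspaces is fixed and called positive, the other negative. Every isotropic line $\langle v\rangle$ lies in a unique positive maximal isotropic subspace $\Lambda_v^+$ and a unique negative one $\Lambda_v^-$. $\Lambda_+$ is a fixed positive and $\Lambda_-$ a fixed negative maximal isotropic subspace; $\Lambda_+\cap\Lambda_-$ is a line, spanned by $\sigma'$. $\Lambda'$ is a maximal isotropic subspace with $\Lambda_+\cap\Lambda'=0$, identified with $\Lambda_+^*$ via $q$, so $E=\Lambda_+\oplus\Lambda_+^*$ and $(\sigma,\tau)$ is isotropic iff $\tau(\sigma)=0$. $\omega\in\bigwedge^2\Lambda_+^*$ is nonzero and $\sigma\lrcorner\omega=\omega(\sigma,\cdot)\in\Lambda_+^*$; for isotropic $(\sigma,\tau)$, $\tau$ and $\sigma\lrcorner\omega$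 are proportional. $Q\subset\mathbb P(E)$ is the quadric of isotropic lines and $\pi_-\colon Q\to\mathbb P(\Lambda_-)$ is $[v]\mapsto\Lambda_v^+\cap\Lambda_-$. *)

From HB Require Import structures.
From mathcomp Require Import all_boot all_order all_algebra.
From mathcomp Require Import reals.
From mathcomp.real_closed Require Import complex.
Set Implicit Arguments. Unset Strict Implicit. Unset Printing Implicit Defensive.
Import Order.TTheory GRing.Theory Num.Theory.
Local Open Scope ring_scope.

(* Model: Lambda_+ = row vectors 'rV_2, Lambda_+^* = 'rV_2 with the pairing
   tau(sigma) = (sigma *m tau^T) 0 0, and E = Lambda_+ (+) Lambda_+^* realised as
   'rV_(2+2), the vector (sigma,tau) being row_mx sigma tau.  The form q is
   determined by Lambda_+ and Lambda' = Lambda_+^* being isotropic and the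
   identification Lambda' ~ Lambda_+^* via q:
   q((s,t),(s',t')) = t'(s) + t(s')  (up to the harmless global scalar). *)
Section Model.
Variable F : fieldType.

Definition vecE (s t : 'rV[F]_2) : 'rV[F]_(2 + 2) := row_mx s t.

Definition qf (x y : 'rV[F]_(2 + 2)) : F :=
  (lsubmx x *m (rsubmx y)^T + lsubmx y *m (rsubmx x)^T) 0 0.

Definition isotropic m (A : 'M[F]_(m, 2 + 2)) : Prop :=
  forall x y : 'rV[F]_(2 + 2), (x <= A)%MS -> (y <= A)%MS -> qf x y = 0.

Definition max_isotropic m (A : 'M[F]_(m, 2 + 2)) : Prop :=
  isotropic A /\
  forall B : 'M[F]_(2 + 2), isotropic B -> (A <= B)%MS -> (B <= A)%MS.

Definition Lplus : 'M[F]_(2, 2 + 2) := row_mx 1%:M 0.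

(* The two families of maximal isotropic subspaces: U lies in the family of
   Lambda_+ (positive) iff dim (U ∩ Lambda_+) is even, otherwise negative. *)
Definition positive m (A : 'M[F]_(m, 2 + 2)) : Prop :=
  max_isotropic A /\ ~~ odd (\rank (A :&: Lplus)%MS).
Definition negative m (A : 'M[F]_(m, 2 + 2)) : Prop :=
  max_isotropic A /\ odd (\rank (A :&: Lplus)%MS).

(* omega in wedge^2 Lambda_+^* as a skew 2x2 matrix W:
   omega(a,b) = (a *m W *m b^T) 0 0, and  sigma ⌟ omega = sigma *m W  in Lambda_+^*. *)
Definition contr (s : 'rV[F]_2) (W : 'M[F]_2) : 'rV[F]_2 := s *m W.

End Model.

From HB Require Import structures.
From mathcomp Require Import all_boot all_order all_algebra.
From mathcomp Require Import reals.
From mathcomp.real_closed Require Import complex.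
From mathcomp Require Import ring.
Set Implicit Arguments. Unset Strict Implicit. Unset Printing Implicit Defensive.
Import Order.TTheory GRing.Theory Num.Theory.
Local Open Scope ring_scope.

(* As W is a nonzero skew 2x2 matrix, the
   [dot]-orthogonal of a nonzero a is the line through a *m W; hence Lambda_- is
   spanned by (sigma', 0) and (0, sigma' W).  By the parity condition a positive
   U either contains Lambda_+ or meets it trivially, and in both cases
   orthogonality to v = (sigma, tau) forces U into the graph {(a, lambda a W)}
   (resp. {0} (+) Lambda_+^* when lambda = oo).  This graph is isotropic and
   contains z = (sigma', lambda sigma' W), so z lies in the maximal U; z also
   lies in Lambda_-, whose points on the graph are the multiples of z. *)

Section Quadric.
Variable K : fieldType.
Hypothesis two_neq0 : 2%:R != 0 :> K.

Definition dot (a b : 'rV[K]_2) : K := (a *m b^T) 0 0.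

Lemma big_ord2 (F : 'I_2 -> K) : \sum_i F i = F 0 + F 1.
Proof. by rewrite big_ord_recr big_ord1; congr (F _ + F _); apply: val_inj. Qed.

Lemma dotE a b : dot a b = a 0 0 * b 0 0 + a 0 1 * b 0 1.
Proof. by rewrite /dot mxE big_ord2 !mxE. Qed.

Lemma dotC a b : dot a b = dot b a.
Proof. by rewrite !dotE; ring. Qed.

Lemma dot0l a : dot 0 a = 0.
Proof. by rewrite dotE !mxE; ring. Qed.

Lemma dot0r a : dot a 0 = 0.
Proof. by rewrite dotC dot0l. Qed.

Lemma dotZl k a b : dot (k *: a) b = k * dot a b.
Proof. by rewrite !dotE !mxE; ring. Qed.

Lemma dotZr k a b : dot a (k *: b) = k * dot a b.
Proof. by rewrite dotC dotZl dotC. Qed.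

Lemma dotDr a b c : dot a (b + c) = dot a b + dot a c.
Proof. by rewrite !dotE !mxE; ring. Qed.

Lemma dotBr a b c : dot a (b - c) = dot a b - dot a c.
Proof. by rewrite !dotE !mxE; ring. Qed.

Lemma rV2P (a b : 'rV[K]_2) : a 0 0 = b 0 0 -> a 0 1 = b 0 1 -> a = b.
Proof.
move=> h0 h1; apply/rowP => -[[|[|j]] lt_j2] //.
- by rewrite (_ : Ordinal lt_j2 = 0) //; apply: val_inj.
- by rewrite (_ : Ordinal lt_j2 = 1) //; apply: val_inj.
Qed.

Lemma rV2_neq0 (a : 'rV[K]_2) : a != 0 -> a 0 0 != 0 \/ a 0 1 != 0.
Proof.
move=> a0; case: (eqVneq (a 0 0) 0) => [a00|]; last by left.
case: (eqVneq (a 0 1) 0) => [a01|]; last by right.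
by case/eqP: a0; apply: rV2P; rewrite mxE.
Qed.

Lemma rV2_collinear (a b : 'rV[K]_2) :
  a != 0 -> a 0 0 * b 0 1 = a 0 1 * b 0 0 -> exists k, b = k *: a.
Proof.
move=> /rV2_neq0 [a0|a1] ab.
- exists (b 0 0 / a 0 0); apply: rV2P; rewrite !mxE; first by field.
  by apply: (mulfI a0); rewrite ab; field.
- exists (b 0 1 / a 0 1); apply: rV2P; rewrite !mxE; last by field.
  by apply: (mulfI a1); rewrite -ab; field.
Qed.

Lemma dot_nondeg b : (forall e, dot e b = 0) -> b = 0.
Proof.
move=> eb; apply: rV2P.
- by have := eb (delta_mx 0 0); rewrite dotE !mxE /= mul1r mul0r addr0.
- by have := eb (delta_mx 0 1); rewrite dotE !mxE /= mul1r mul0r add0r.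
Qed.

Lemma vecEP (x : 'rV[K]_(2 + 2)) : exists a b, x = vecE a b.
Proof. by exists (lsubmx x), (rsubmx x); rewrite /vecE hsubmxK. Qed.

Lemma vecE0 : vecE 0 0 = 0 :> 'rV[K]_(2 + 2).
Proof. exact: row_mx0. Qed.

Lemma vecE_inj a b c d : vecE a b = vecE c d :> 'rV[K]_(2 + 2) -> a = c /\ b = d.
Proof. exact: eq_row_mx. Qed.

Lemma vecE_comb k l a b c d :
  k *: vecE a b + l *: vecE c d = vecE (k *: a + l *: c) (k *: b + l *: d) :> 'rV[K]_(2 + 2).
Proof. by rewrite /vecE !scale_row_mx add_row_mx. Qed.

Lemma vecEZ k a b : k *: vecE a b = vecE (k *: a) (k *: b) :> 'rV[K]_(2 + 2).
Proof. exact: scale_row_mx. Qed.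

Lemma qfE a b c d : qf (vecE a b) (vecE c d) = dot a d + dot c b.
Proof. by rewrite /qf /vecE !row_mxKl !row_mxKr mxE. Qed.

Lemma qfC x y : qf x y = qf y x :> K.
Proof. by have [a [b ->]] := vecEP x; have [c [d ->]] := vecEP y; rewrite !qfE addrC. Qed.

Lemma qf_comb k l x y z : qf (k *: x + l *: y) z = k * qf x z + l * qf y z :> K.
Proof.
have [a [b ->]] := vecEP x; have [c [d ->]] := vecEP y; have [e [f ->]] := vecEP z.
by rewrite vecE_comb !qfE !dotE !mxE; ring.
Qed.

Lemma qf_vecE_self a b : qf (vecE a b) (vecE a b) = 0 -> dot a b = 0.
Proof.
rewrite qfE -mulr2n -mulr_natr => /eqP.
by rewrite mulf_eq0 (negbTE two_neq0) orbF => /eqP.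
Qed.

Lemma sub_comb m (A : 'M[K]_(m, 2 + 2)) k l (x y : 'rV_(2 + 2)) :
  (x <= A)%MS -> (y <= A)%MS -> ((k *: x + l *: y)%R <= A)%MS.
Proof. by move=> xA yA; apply: addmx_sub; apply: scalemx_sub. Qed.

Lemma max_isotropic_orth_sub m (A : 'M[K]_(m, 2 + 2)) z :
  max_isotropic A -> qf z z = 0 -> (forall x, (x <= A)%MS -> qf x z = 0) ->
  (z <= A)%MS.
Proof.
move=> [isoA maxA] zz Az.
have isoAz : isotropic (A + z)%MS.
  move=> x y /sub_addsmxP [[u1 u2] ->] /sub_addsmxP [[v1 v2] ->] /=.
  rewrite [u2]mx11_scalar [v2]mx11_scalar !mul_scalar_mx.
  have [xA yA] : (u1 *m A <= A)%MS /\ (v1 *m A <= A)%MS by rewrite !submxMl.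
  rewrite -[u1 *m A]scale1r -[v1 *m A]scale1r !qf_comb ![qf _ (_ + _)]qfC !qf_comb.
  by rewrite !(qfC z) zz isoA // !Az //; ring.
exact: submx_trans (addsmxSr A z) (maxA _ isoAz (addsmxSl A z)).
Qed.

Lemma sub_Lplus_vecE a b : (vecE a b <= Lplus K)%MS = (b == 0).
Proof.
apply/idP/eqP => [/submxP [D] | ->].
  by rewrite /Lplus mul_mx_row mulmx0 => /vecE_inj [].
by rewrite /vecE -[a]mulmx1 -[0 : 'rV_2](mulmx0 _ a) -mul_mx_row submxMl.
Qed.

Lemma vecE_sub_Lplus a : (vecE a 0 <= Lplus K)%MS.
Proof. by rewrite sub_Lplus_vecE. Qed.

Lemma even_cap_Lplus m (U : 'M[K]_(m, 2 + 2)) :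
  ~~ odd (\rank (U :&: Lplus K)) ->
  (forall a, (vecE a 0 <= U)%MS -> a = 0) \/ (Lplus K <= U)%MS.
Proof.
move=> even_cap.
have rk_le2 : (\rank (U :&: Lplus K) <= 2)%N.
  exact: leq_trans (mxrankS (capmxSr _ _)) (rank_leq_row _).
have [rk0|rk2] : \rank (U :&: Lplus K) = 0%N \/ \rank (U :&: Lplus K) = 2%N.
  by move: rk_le2 even_cap; case: (\rank _) => [|[|[|]]]; auto.
- left => a aU; have : (vecE a 0 <= U :&: Lplus K)%MS by rewrite sub_capmx aU vecE_sub_Lplus.
  move/eqP: rk0; rewrite mxrank_eq0 => /eqP ->; rewrite submx0 -vecE0 => /eqP.
  by case/vecE_inj.
- right; apply: submx_trans (capmxSl U (Lplus K)).
  rewrite -(mxrank_leqif_sup (capmxSr U (Lplus K))).2 eqn_leq mxrankS ?capmxSr //=.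
  by rewrite rk2 rank_leq_row.
Qed.

Lemma isotropic_Lplus_sub m (U : 'M[K]_(m, 2 + 2)) a b :
  isotropic U -> (Lplus K <= U)%MS -> (vecE a b <= U)%MS -> b = 0.
Proof.
move=> isoU LU xU; apply: dot_nondeg => e.
by have := isoU _ _ (submx_trans (vecE_sub_Lplus e) LU) xU; rewrite qfE dot0r addr0.
Qed.

Section SkewForm.
Variable W : 'M[K]_2.
Hypotheses (W_skew : W^T = - W) (W_neq0 : W != 0).
Local Notation w := (W 0 1).

Lemma skew_entry i j : W j i = - W i j.
Proof. by have := congr1 (fun M : 'M_2 => M i j) W_skew; rewrite !mxE. Qed.

Lemma skew_diag i : W i i = 0.
Proof.
apply/eqP; move/eqP: (skew_entry i i); rewrite -addr_eq0 -mulr2n -mulr_natl.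
by rewrite mulf_eq0 (negbTE two_neq0).
Qed.

Lemma mulW0 (s : 'rV[K]_2) : (s *m W) 0 0 = - w * s 0 1.
Proof. by rewrite mxE big_ord2 skew_diag (skew_entry 0 1); ring. Qed.

Lemma mulW1 (s : 'rV[K]_2) : (s *m W) 0 1 = w * s 0 0.
Proof. by rewrite mxE big_ord2 skew_diag; ring. Qed.

Lemma w_neq0 : w != 0.
Proof.
apply: contraNneq W_neq0 => w0; apply/eqP/row_matrixP => i.
by rewrite rowE row0; apply: rV2P; rewrite ?mulW0 ?mulW1 w0 !mxE; ring.
Qed.

Lemma dot_mulW_self (a : 'rV[K]_2) : dot a (a *m W) = 0.
Proof. by rewrite dotE mulW0 mulW1; ring. Qed.

Lemma dot_mulWC (a b : 'rV[K]_2) : dot a (b *m W) = - dot b (a *m W).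
Proof. by rewrite !dotE !mulW0 !mulW1; ring. Qed.

Lemma mulWW (a : 'rV[K]_2) : a *m W *m W = - w ^+ 2 *: a.
Proof. by apply: rV2P; rewrite ?mulW0 ?mulW1 ?mulW0 ?mulW1 !mxE; ring. Qed.

Lemma mulW_neq0 (a : 'rV[K]_2) : a != 0 -> a *m W != 0.
Proof.
apply: contraNneq => aW0; have := mulWW a; rewrite aW0 mul0mx => /esym/eqP.
by rewrite scaler_eq0 oppr_eq0 expf_eq0 (negbTE w_neq0) andbF.
Qed.

Lemma dot_eq0_mulW (a b : 'rV[K]_2) : a != 0 -> dot a b = 0 -> exists k, b = k *: (a *m W).
Proof.
move=> a0 ab; apply: rV2_collinear; first exact: mulW_neq0.
rewrite mulW0 mulW1; apply/eqP; rewrite -subr_eq0; apply/eqP.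
by rewrite -(mulr0 (- w)) -ab dotE; ring.
Qed.

Lemma dot_mulW_eq0 (a b : 'rV[K]_2) : a != 0 -> dot (a *m W) b = 0 -> exists k, b = k *: a.
Proof.
move=> a0 /(dot_eq0_mulW (mulW_neq0 a0)) [k ->].
by exists (k * - w ^+ 2); rewrite mulWW scalerA.
Qed.

Definition on_graph (lam : option K) (a b : 'rV[K]_2) : Prop :=
  match lam with Some l => b = l *: (a *m W) | None => a = 0 end.

Definition graph_vec (lam : option K) (s : 'rV[K]_2) : 'rV[K]_(2 + 2) :=
  match lam with Some l => vecE s (l *: (s *m W)) | None => vecE 0 (s *m W) end.

Lemma on_graph_orth lam a b c d :
  on_graph lam a b -> on_graph lam c d -> qf (vecE a b) (vecE c d) = 0.
Proof.
case: lam => [l -> -> | -> ->]; last by rewrite qfE !dot0l addr0.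
by rewrite qfE !dotZr -mulrDr dot_mulWC addNr mulr0.
Qed.

Lemma qf_graph_vec lam s a b : on_graph lam a b -> qf (vecE a b) (graph_vec lam s) = 0.
Proof. by case: lam => [l|] ab; apply: (on_graph_orth ab). Qed.

Lemma qf_graph_vec_self lam s : qf (graph_vec lam s) (graph_vec lam s) = 0.
Proof. by case: lam => [l|]; apply: qf_graph_vec. Qed.

Section MaxIsotropicThroughLine.
Variables (m : nat) (A : 'M[K]_(m, 2 + 2)) (s : 'rV[K]_2).
Hypotheses (maxA : max_isotropic A) (s_neq0 : s != 0).
Hypothesis capA : (Lplus K :&: A == vecE s 0)%MS.

Lemma vecE_sub_cap : (vecE s 0 <= A)%MS.
Proof. by case/andP: capA => _ /submx_trans; apply; rewrite capmxSr. Qed.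

Lemma max_isotropic_vecE x :
  (x <= A)%MS -> exists al be, x = vecE (al *: s) (be *: (s *m W)).
Proof.
have [a [b ->]] := vecEP x => xA.
have [be bE] : exists be, b = be *: (s *m W).
  apply: dot_eq0_mulW s_neq0 _.
  by have := maxA.1 _ _ xA vecE_sub_cap; rewrite qfE dot0r add0r.
rewrite bE in xA *; have [be0 | be_neq0] := eqVneq be 0.
  have : (vecE a 0 <= vecE s 0)%MS.
    case/andP: capA => + _; apply: submx_trans.
    by rewrite sub_capmx vecE_sub_Lplus -(scale0r (s *m W)) -be0.
  by case/sub_rVP => al; rewrite vecEZ scaler0 => /vecE_inj [-> _]; exists al, be.
have /(dot_mulW_eq0 s_neq0) [al ->] : dot (s *m W) a = 0.
  have /qf_vecE_self := maxA.1 _ _ xA xA.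
  by rewrite dotZr dotC => /eqP; rewrite mulf_eq0 (negbTE be_neq0) => /eqP.
by exists al, be.
Qed.

Lemma vecE0_mulW_sub : (vecE 0 (s *m W) <= A)%MS.
Proof.
apply: max_isotropic_orth_sub maxA _ _ => [|x /max_isotropic_vecE [al [be ->]]].
  by rewrite qfE dot0l add0r.
by rewrite qfE dotZl dot_mulW_self mulr0 dot0l addr0.
Qed.

Lemma graph_vec_sub lam : (graph_vec lam s <= A)%MS.
Proof.
case: lam => [l|] /=; last exact: vecE0_mulW_sub.
have -> : vecE s (l *: (s *m W)) = 1 *: vecE s 0 + l *: vecE 0 (s *m W).
  by rewrite vecE_comb !scale1r scaler0 addr0 add0r.
by rewrite sub_comb ?vecE_sub_cap ?vecE0_mulW_sub.
Qed.

End MaxIsotropicThroughLine.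

Section TransverseToLplus.
Variables (m : nat) (U : 'M[K]_(m, 2 + 2)).
Hypotheses (isoU : isotropic U) (capU0 : forall a, (vecE a 0 <= U)%MS -> a = 0).

Lemma isotropic_graph_Some l sigma a b :
  sigma != 0 -> (vecE sigma (l *: (sigma *m W)) <= U)%MS ->
  (vecE a b <= U)%MS -> b = l *: (a *m W).
Proof.
move=> s0 vU xU.
have [c cE] : exists c, b - l *: (a *m W) = c *: (sigma *m W).
  apply: dot_eq0_mulW s0 _; move: (isoU xU vU).
  by rewrite qfE dotZr dot_mulWC mulrN addrC dotBr dotZr.
have [c0 | c_neq0] := eqVneq c 0.
  by apply/eqP; rewrite -subr_eq0 cE c0 scale0r.
have bE : b = c *: (sigma *m W) + l *: (a *m W) by rewrite -cE subrK.
rewrite bE in xU; have [k aE] : exists k, a = k *: sigma.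
  apply: dot_mulW_eq0 s0 _; have /qf_vecE_self := isoU xU xU.
  rewrite dotDr !dotZr dot_mulW_self mulr0 addr0 => /eqP.
  by rewrite mulf_eq0 (negbTE c_neq0) dotC => /eqP.
(* Otherwise a combination of x and v is the vector (sigma, 0) of U :&: Lplus. *)
suff /capU0/eqP : (vecE sigma 0 <= U)%MS by rewrite (negbTE s0).
have -> : vecE sigma 0 = (1 + l * k / c) *: vecE sigma (l *: (sigma *m W))
    + (- (l / c)) *: vecE a (c *: (sigma *m W) + l *: (a *m W)).
  rewrite vecE_comb aE; congr vecE; apply: rV2P; rewrite !(mulW0, mulW1, mxE); by field.
exact: sub_comb.
Qed.

Lemma isotropic_graph_None tau a b :
  tau != 0 -> (vecE 0 tau <= U)%MS -> (vecE a b <= U)%MS -> a = 0.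
Proof.
move=> t0 vU xU.
have [k aE] : exists k, a = k *: (tau *m W).
  apply: dot_eq0_mulW t0 _; rewrite dotC.
  by have := isoU xU vU; rewrite qfE dot0l addr0.
rewrite aE in xU *; have [-> | k_neq0] := eqVneq k 0; first by rewrite scale0r.
have [n bE] : exists n, b = n *: tau.
  apply: dot_mulW_eq0 t0 _; have /qf_vecE_self := isoU xU xU.
  by rewrite dotZl => /eqP; rewrite mulf_eq0 (negbTE k_neq0) => /eqP.
apply: capU0.
have -> : vecE (k *: (tau *m W)) 0 = 1 *: vecE (k *: (tau *m W)) b + (- n) *: vecE 0 tau.
  by rewrite vecE_comb bE !scale1r scaler0 addr0 scaleNr subrr.
exact: sub_comb.
Qed.

End TransverseToLplus.

Lemma positive_sub_graph m (U : 'M[K]_(m, 2 + 2)) sigma tau lam :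
  positive U -> vecE sigma tau != 0 ->
  match lam with Some l => sigma != 0 /\ tau = l *: (sigma *m W) | None => sigma = 0 end ->
  (vecE sigma tau <= U)%MS ->
  forall a b, (vecE a b <= U)%MS -> on_graph lam a b.
Proof.
move=> [[isoU _] /even_cap_Lplus [capU0 | LU]] v_neq0 hlam vU a b xU.
- case: lam hlam => [l [s0 tE] | s0] /=.
    by rewrite tE in vU; apply: isotropic_graph_Some s0 vU xU.
  have t0 : tau != 0 by apply: contraNneq v_neq0 => t0; rewrite s0 t0 vecE0.
  by rewrite s0 in vU; apply: isotropic_graph_None t0 vU xU.
- have t0 := isotropic_Lplus_sub isoU LU vU.
  case: lam hlam => [l [s0 tE] | s0] /=; last by move: v_neq0; rewrite s0 t0 vecE0 eqxx.
  have l0 : l = 0.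
    by move/eqP: t0; rewrite tE scaler_eq0 (negbTE (mulW_neq0 s0)) orbF => /eqP.
  by rewrite (isotropic_Lplus_sub isoU LU xU) l0 scale0r.
Qed.

Lemma max_isotropic_cap_graph m n (U : 'M[K]_(m, 2 + 2)) (A : 'M[K]_(n, 2 + 2)) s lam :
  max_isotropic U -> (forall a b, (vecE a b <= U)%MS -> on_graph lam a b) ->
  max_isotropic A -> s != 0 -> (Lplus K :&: A == vecE s 0)%MS ->
  (U :&: A == graph_vec lam s)%MS.
Proof.
move=> maxU Ugraph maxA s0 capA; apply/andP; split.
- apply/rV_subP => x; rewrite sub_capmx => /andP [xU].
  case/(max_isotropic_vecE maxA s0 capA) => al [be xE]; rewrite xE in xU *.
  apply/sub_rVP; have := Ugraph _ _ xU; case: lam {Ugraph} => [l -> | ->] /=.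
    by exists al; rewrite vecEZ -scalemxAl !scalerA mulrC.
  by exists be; rewrite vecEZ scaler0.
- rewrite sub_capmx (graph_vec_sub maxA s0 capA) andbT.
  apply: max_isotropic_orth_sub maxU (qf_graph_vec_self _ _) _ => x.
  by have [a [b ->]] := vecEP x => /Ugraph; apply: qf_graph_vec.
Qed.

End SkewForm.
End Quadric.

Unset Implicit Arguments.
Set Strict Implicit.
Theorem lemma10p2 (R : realType)
  (W : 'M[R[i]]_2) (hWskew : W^T = - W) (hW0 : W != 0)
  (sigma' : 'rV[R[i]]_2) (hs'0 : sigma' != 0)
  (Lminus : 'M[R[i]]_(2 + 2)) (hLm : negative Lminus)
  (hLmLp : (Lplus R[i] :&: Lminus == vecE sigma' 0)%MS)
  (sigma tau : 'rV[R[i]]_2) (hv0 : vecE sigma tau != 0)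
  (hviso : qf (vecE sigma tau) (vecE sigma tau) = 0)
  (lam : option R[i])
  (hlam : match lam with
          | Some l => sigma != 0 /\ tau = l *: contr sigma W
          | None => sigma = 0
          end)
  (U : 'M[R[i]]_(2 + 2)) (hU : positive U) (hvU : (vecE sigma tau <= U)%MS) :
  (U :&: Lminus ==
     match lam with
     | Some l => vecE sigma' (l *: contr sigma' W)
     | None => vecE 0 (contr sigma' W)
     end)%MS.
Proof.
have two_neq0 : 2%:R != 0 :> R[i] by rewrite pnatr_eq0.
apply: (max_isotropic_cap_graph two_neq0 hWskew hW0) hLm.1 hs'0 hLmLp.
- exact: hU.1.
- exact: positive_sub_graph hU hv0 hlam hvU.
Qed.
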